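(* Let $C$ be a linear $[n,k]_q$-code (a $k$-dimensional subspace of $\mathbb F_q^n$, $1\le k\le n$) and let $r$ be an integer with $1\le r\le k$. Then $$d_r(C)\ge\frac{d(C)\,\Delta_r(C)+e(C)\,(q^r-1-\Delta_r(C))}{q^r-q^{r-1}}.$$
   Context: For $x\in\mathbb F_q^n$, $\|x\|=|\{i:x_i\ne0\}|$ is the Hamming norm; for $D\subseteq\mathbb F_q^n$, $\mathrm{supp}(D)=\{i: x_i\ne0\text{ for some }x\in D\}$ and $\|D\|=|\mathrm{supp}(D)|$. $d(C)=\min\{\|x\|: 0\ne x\in C\}$ and $d_r(C)=\min\{\|D\|: D\text{ a subspace of }C,\ \dim D=r\}$. For a subspace $D$ of $C$, $\Delta(D)=|\{x\in D:\|x\|=d(C)\}|$, and $\Delta_r(C)=\max\{\Delta(D): D\text{ a subspace of }C,\ \dim D=r\}$. Let $S_C=\{\|x\|: x\in C,\ \|x\|>d(C)\}$; $e(C)=\min S_C$ if $S_C\ne\emptyset$ and $e(C)=d(C)$ otherwise. *)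

From HB Require Import structures.
From mathcomp Require Import all_boot all_order all_algebra.
Set Implicit Arguments. Unset Strict Implicit. Unset Printing Implicit Defensive.
Import Order.TTheory GRing.Theory Num.Theory.
Local Open Scope ring_scope.

(* The ambient space F_q^n is 'rV[F]_n for a finite field F, q = #|F|.
   Subspaces of F_q^n are represented, following mathcomp's mxalgebra, as
   row spaces of square matrices A : 'M[F]_n; membership of x in the
   subspace is (x <= A)%MS, inclusion of subspaces is (A <= B)%MS and the
   dimension is \rank A.  Every subspace of F_q^n is the row space of such
   a matrix, and all notions below depend only on the row space. *)

Section Codes.
Variables (F : finFieldType) (n : nat).
Implicit Types (x : 'rV[F]_n) (C D : 'M[F]_n).

Definition hwt x : nat := #|[set i : 'I_n | x 0 i != 0]|.

Definition supp D : {set 'I_n} :=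
  [set i : 'I_n | [exists x : 'rV[F]_n, (x <= D)%MS && (x 0 i != 0)]].

Definition hnorm D : nat := #|supp D|.

(* d(C) = min { ||x|| : 0 <> x in C }  (default value n is irrelevant
   when C <> 0, since all weights are <= n) *)
Definition mindist C : nat :=
  \big[minn/n]_(x : 'rV[F]_n | (x <= C)%MS && (x != 0)) hwt x.

Definition gen_weight C (r : nat) : nat :=
  \big[minn/n]_(D : 'M[F]_n | (D <= C)%MS && (\rank D == r)) hnorm D.

Definition Delta C D : nat :=
  #|[set x : 'rV[F]_n | (x <= D)%MS && (hwt x == mindist C)]|.

Definition Delta_r C (r : nat) : nat :=
  \max_(D : 'M[F]_n | (D <= C)%MS && (\rank D == r)) Delta C D.

Definition next_weight C : nat :=
  if [exists x : 'rV[F]_n, (x <= C)%MS && (mindist C < hwt x)%N]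
  then \big[minn/n]_(x : 'rV[F]_n | (x <= C)%MS && (mindist C < hwt x)%N) hwt x
  else mindist C.

End Codes.

From HB Require Import structures.
From mathcomp Require Import all_boot all_order all_algebra zify lra.
Set Implicit Arguments. Unset Strict Implicit. Unset Printing Implicit Defensive.
Import Order.TTheory GRing.Theory Num.Theory.
Local Open Scope ring_scope.

(* Take an r-dimensional subcode D of C with ||D|| = d_r(C) and count the pairs
   (x, i) with x in D and x_i <> 0.  Each i in supp(D) gives a nonzero linear
   form x |-> x_i on D, nonzero on q^r - q^(r-1) vectors, so the sum of the
   weights of the words of D is d_r(C) (q^r - q^(r-1)).  Among the q^r - 1
   nonzero words of D, Delta(D) <= Delta_r(C) have weight d(C) and all others
   weight at least e(C) >= d(C), which bounds the same sum from below. *)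

Section BigMinNat.
Variables (I : finType) (P : pred I) (G : I -> nat) (m : nat).

Lemma bigminn_le_cond j : P j -> (\big[minn/m]_(i | P i) G i <= G j)%N.
Proof. by rewrite -minEnat; apply: (bigmin_le_cond (T := nat)). Qed.

Lemma eq_bigminn j : P j -> (forall i, P i -> G i <= m)%N ->
  exists2 i, P i & \big[minn/m]_(i | P i) G i = G i.
Proof.
rewrite -minEnat => Pj Gm.
by have [i Pi ->] := eq_bigmin (T := nat) (x := m) j P G Pj Gm; exists i.
Qed.

Lemma le_bigminn b : (b <= m)%N -> (forall i, P i -> b <= G i)%N ->
  (b <= \big[minn/m]_(i | P i) G i)%N.
Proof. by rewrite -minEnat; apply: (le_bigmin (T := nat)). Qed.

End BigMinNat.

Section RowSpaces.
Variable F : finFieldType.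

Lemma card_rowspace m p (A : 'M[F]_(p, m)) :
  #|[set x : 'rV[F]_m | (x <= A)%MS]| = (#|F| ^ \rank A)%N.
Proof.
have -> : [set x : 'rV[F]_m | (x <= A)%MS] =
          [set w *m row_base A | w in [set: 'rV[F]_(\rank A)]].
  apply/setP => x; rewrite inE -(eq_row_base A).
  by apply/submxP/imsetP => [[w ->]|[w _ ->]]; exists w.
rewrite card_imset; last exact: row_free_inj (row_base_free A).
by rewrite cardsT card_mx mul1n.
Qed.

Lemma card_rowspace_nz m p (A : 'M[F]_(p, m)) :
  #|[set x : 'rV[F]_m | (x <= A)%MS && (x != 0)]| = (#|F| ^ \rank A).-1.
Proof.
rewrite -card_rowspace [in RHS](cardsD1 0) [0 \in _]inE sub0mx add1n /=.
by apply: eq_card => x; rewrite !inE andbC.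
Qed.

Lemma card_rowspace_diff m p1 p2 (A : 'M[F]_(p1, m)) (B : 'M[F]_(p2, m)) :
  (B <= A)%MS ->
  #|[set x : 'rV[F]_m | (x <= A)%MS && ~~ (x <= B)%MS]| =
  (#|F| ^ \rank A - #|F| ^ \rank B)%N.
Proof.
move=> sBA; have sub : [set x : 'rV[F]_m | (x <= B)%MS] \subset [set x | (x <= A)%MS].
  by apply/subsetP => x; rewrite !inE => /submx_trans->.
rewrite -!card_rowspace -[in X in (_ - X)%N](setIidPr sub) -cardsD.
by apply: eq_card => x; rewrite !inE andbC.
Qed.

End RowSpaces.

Lemma mxrank_cap_hyperplane (F : fieldType) m p n
    (A : 'M[F]_(m, n)) (K : 'M[F]_(p, n)) :
  \rank K = n.-1 -> ~~ (A <= K)%MS -> \rank (A :&: K)%MS = (\rank A).-1.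
Proof.
move=> rK sAK.
have ltK : (\rank K < \rank (A + K))%N.
  by rewrite (ltn_leqif (mxrank_leqif_sup (addsmxSr A K))) addsmx_sub submx_refl andbT.
have leAK : (\rank (A + K) <= n)%N := rank_leq_col _.
have A_gt0 : (0 < \rank A)%N.
  by rewrite lt0n mxrank_eq0; apply: contraNneq sAK => ->; apply: sub0mx.
have := mxrank_sum_cap A K; lia.
Qed.

Section Weights.
Variables (F : finFieldType) (n : nat).
Implicit Types (x : 'rV[F]_n) (D : 'M[F]_n).

Lemma hwt0 : hwt (0 : 'rV[F]_n) = 0%N.
Proof. by apply/eqP; rewrite cards_eq0; apply/eqP/setP => i; rewrite !inE mxE eqxx. Qed.

Lemma hwt_gt0 x : x != 0 -> (0 < hwt x)%N.
Proof.
move=> nz_x; rewrite card_gt0; apply: contraNneq nz_x => x0.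
apply/eqP/rowP => i; rewrite mxE; apply/eqP; apply: contraT => xi.
by rewrite -(in_set0 i) -x0 inE.
Qed.

Lemma hwt_le x : (hwt x <= n)%N.
Proof. by rewrite -[n in (_ <= n)%N]card_ord max_card. Qed.

Lemma hnorm_le D : (hnorm D <= n)%N.
Proof. by rewrite -[n in (_ <= n)%N]card_ord max_card. Qed.

Lemma sub_ker_coord x i : (x <= kermx (delta_mx i 0 : 'cV[F]_n))%MS = (x 0 i == 0).
Proof.
rewrite sub_kermx -colE; apply/eqP/eqP => [/matrixP/(_ 0 0)|xi0].
  by rewrite !mxE.
by apply/matrixP => a b; rewrite !ord1 !mxE.
Qed.

(* [x |-> x_i] is a nonzero linear form on [D]: its kernel is a hyperplane. *)
Lemma card_rowspace_coord_nz D i : i \in supp D ->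
  #|[set x : 'rV[F]_n | (x <= D)%MS && (x 0 i != 0)]| =
  (#|F| ^ \rank D - #|F| ^ (\rank D).-1)%N.
Proof.
rewrite inE => /existsP[y /andP[yD yi]].
set K := kermx (delta_mx i 0 : 'cV[F]_n).
have rK : \rank K = n.-1 by rewrite mxrank_ker mxrank_delta subn1.
have DK : ~~ (D <= K)%MS.
  by apply: contra yi => /(submx_trans yD); rewrite sub_ker_coord.
rewrite -(mxrank_cap_hyperplane rK DK) -card_rowspace_diff ?capmxSl //.
by apply: eq_card => x; rewrite !inE sub_capmx sub_ker_coord; case: (x <= D)%MS.
Qed.

Lemma sum_hwt_rowspace D :
  (\sum_(x | (x <= D)%MS) hwt x)%N =
  (hnorm D * (#|F| ^ \rank D - #|F| ^ (\rank D).-1))%N.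
Proof.
under eq_bigr => x _ do rewrite /hwt -sum1_card.
rewrite (exchange_big_dep xpredT) //=.
transitivity (\sum_(i in supp D) (#|F| ^ \rank D - #|F| ^ (\rank D).-1))%N;
  last by rewrite sum_nat_const.
rewrite [in RHS]big_mkcond; apply: eq_bigr => i _.
rewrite sum1_card; case: ifPn => [/card_rowspace_coord_nz <-|iD].
  by apply: eq_card => x; rewrite unfold_in !inE.
apply: eq_card0 => x; rewrite unfold_in inE.
by apply: contraNF iD => /andP[xD xi]; rewrite inE; apply/existsP; exists x; rewrite xD.
Qed.

End Weights.

Section CodeParameters.
Variables (F : finFieldType) (n : nat) (C : 'M[F]_n).
Implicit Types (x : 'rV[F]_n) (D : 'M[F]_n).

Lemma mindist_le x : (x <= C)%MS -> x != 0 -> (mindist C <= hwt x)%N.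
Proof. by move=> xC nz_x; apply: bigminn_le_cond; rewrite xC. Qed.

Lemma mindist_gt0 : (0 < n)%N -> (0 < mindist C)%N.
Proof. by move=> n_gt0; apply: le_bigminn => // x /andP[_ /hwt_gt0]. Qed.

Lemma next_weight_le x :
  (x <= C)%MS -> (mindist C < hwt x)%N -> (next_weight C <= hwt x)%N.
Proof.
move=> xC dx; rewrite /next_weight ifT; first by apply: bigminn_le_cond; rewrite xC.
by apply/existsP; exists x; rewrite xC.
Qed.

Lemma mindist_le_next_weight : (mindist C <= next_weight C)%N.
Proof.
rewrite /next_weight; case: ifP => // /existsP[x /andP[_ dx]].
by apply: le_bigminn => [|y /andP[_ /ltnW]//]; apply: ltnW (leq_trans dx (hwt_le x)).
Qed.

Lemma gen_weight_attained r : (r <= \rank C)%N ->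
  exists2 D, (D <= C)%MS && (\rank D == r) & gen_weight C r = hnorm D.
Proof.
move=> rC; set D := (pid_mx r : 'M_(n, \rank C)) *m row_base C.
have DC : (D <= C)%MS && (\rank D == r).
  rewrite mxrankMfree ?row_base_free // rank_pid_mx //;
    last exact: leq_trans rC (rank_leq_col C).
  by rewrite eqxx andbT (submx_trans (submxMl _ _)) ?eq_row_base.
rewrite /gen_weight.
have [|D' D'C ->] := eq_bigminn (P := fun D' => (D' <= C)%MS && (\rank D' == r))
  (G := @hnorm F n) (m := n) DC; first by move=> D' _; apply: hnorm_le.
by exists D'.
Qed.

Lemma Delta_le_Delta_r D : (D <= C)%MS -> (Delta C D <= Delta_r C (\rank D))%N.
Proof. by move=> DC; apply: (leq_bigmax_cond (F := Delta C)); rewrite DC eqxx. Qed.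

Section Subcode.
Variable D : 'M[F]_n.
Hypothesis n_gt0 : (0 < n)%N.

Let minD := [set x : 'rV[F]_n | (x <= D)%MS && (hwt x == mindist C)].
Let nzD := [set x : 'rV[F]_n | (x <= D)%MS && (x != 0)].

Lemma min_weight_sub_nonzero : minD \subset nzD.
Proof.
apply/subsetP => x; rewrite !inE => /andP[-> /eqP xd] /=.
by apply: contraTneq (mindist_gt0 n_gt0) => x0; rewrite -xd x0 hwt0.
Qed.

Lemma Delta_le_card_nonzero : (Delta C D <= (#|F| ^ \rank D).-1)%N.
Proof. by rewrite -card_rowspace_nz; apply: subset_leq_card min_weight_sub_nonzero. Qed.

(* Nonzero words of [D] have weight [d(C)] or at least [e(C)]. *)
Lemma sum_hwt_subcode_ge : (D <= C)%MS ->
  (mindist C * Delta C D + next_weight C * ((#|F| ^ \rank D).-1 - Delta C D)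
     <= \sum_(x | (x <= D)%MS) hwt x)%N.
Proof.
move=> DC; have sub := min_weight_sub_nonzero.
have -> : (\sum_(x | (x <= D)%MS) hwt x = \sum_(x in nzD) hwt x)%N.
  by rewrite (bigD1 0) ?sub0mx //= hwt0 add0n; apply: eq_bigl => x; rewrite inE.
rewrite (big_setID minD) (setIidPr sub) -card_rowspace_nz /Delta -/minD.
rewrite -(setIidPr sub) -cardsD (setIidPr sub) !(mulnC _ #|_|) -!sum_nat_const.
apply: leq_add; first by apply/eq_leq/eq_bigr => x; rewrite inE => /andP[_ /eqP].
apply: leq_sum => x; rewrite !inE => /andP[xA /andP[xD nz_x]].
apply: next_weight_le (submx_trans xD DC) _.
by rewrite ltn_neqAle eq_sym mindist_le ?(submx_trans xD DC) // andbT; rewrite xD in xA.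
Qed.

End Subcode.
End CodeParameters.

Theorem theorem4p2 (F : finFieldType) (n k : nat) (C : 'M[F]_n) (r : nat) :
  (1 <= k <= n)%N -> \rank C = k -> (1 <= r <= k)%N ->
  let q : rat := (#|F|)%:R in
  ((gen_weight C r)%:R : rat) >=
    ((mindist C)%:R * (Delta_r C r)%:R
       + (next_weight C)%:R * (q ^+ r - 1 - (Delta_r C r)%:R))
    / (q ^+ r - q ^+ r.-1).
Proof.
move=> /andP[k_gt0 kn] rkC /andP[r_gt0 rk] /=.
have n_gt0 : (0 < n)%N by apply: leq_trans kn.
have rC : (r <= \rank C)%N by rewrite rkC.
have [D /andP[DC /eqP rD] ->] := gen_weight_attained rC.
have low := sum_hwt_subcode_ge n_gt0 DC.
have DleN := Delta_le_card_nonzero C D n_gt0.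
have DDr := Delta_le_Delta_r DC.
have de := mindist_le_next_weight C.
rewrite sum_hwt_rowspace rD in low; rewrite rD in DleN DDr.
have qr : (#|F| ^ r.-1 < #|F| ^ r)%N by rewrite ltn_exp2l ?card_finNzRing_gt1 ?ltn_predL.
have qr_gt0 : (0 < #|F| ^ r)%N := leq_ltn_trans (leq0n _) qr.
move: low DDr de; rewrite -!(ler_nat rat) natrD !natrM !natrB ?(ltnW qr) //.
rewrite -subn1 natrB // => low DDr de.
rewrite -!natrX ler_pdivrMr ?subr_gt0 ?ltr_nat //.
nra.
Qed.
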